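(* Let $G$ be a finite group and $\rho:G\to GL(V)$ a finite-dimensional representation over an algebraically closed field $\mathbb{F}$ of characteristic $p$. Let $N$ be the subgroup of $G$ generated by the $p$-regular elements of $\ker\rho$. Then $N$ is normal in $G$, and $\rho$ factors through a representation $\overline\rho:G/N\to GL(V)$ which is tensor-rich (as an $\mathbb{F}[G/N]$-module).
   Context: An element of a finite group is $p$-regular if its order is invertible in $\mathbb{F}$. For a group $H$, an $\mathbb{F}H$-module $W$ is rich if every simple $\mathbb{F}H$-module occurs as a composition factor of $W$, and tensor-rich if $\bigoplus_{k=0}^tW^{\otimes k}$ is rich for some positive integer $t$ (with $H$ acting diagonally on tensor products over $\mathbb{F}$ and trivially on $W^{\otimes0}=\mathbb{F}$). *)

From HB Require Import structures.
From mathcomp Require Import all_boot all_order all_fingroup all_algebra all_solvable.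
From mathcomp Require Import mxrepresentation character.
Set Implicit Arguments.
Unset Strict Implicit.
Unset Printing Implicit Defensive.
Import GRing.Theory.
Local Open Scope ring_scope.
Local Open Scope group_scope.

Definition p_regular (F : fieldType) (gT : finGroupType) (x : gT) : bool :=
  ((#[x]%N)%:R : F) \is a GRing.unit.

Definition preg_ker_subgroup (F : fieldType) (gT : finGroupType) (G : {group gT})
    (n : nat) (rG : mx_representation F G n) : {group gT} :=
  <<[set x in rker rG | p_regular F x]>>%G.

Section TensorRich.
Variables (F : fieldType) (gT : finGroupType) (H : {group gT}).

Lemma triv_mx_repr : mx_repr H (fun _ : gT => 1%:M : 'M[F]_1).
Proof. by split=> // x y _ _; rewrite mulmx1. Qed.

Definition triv_grepr : representation F H :=
  Representation (MxRepresentation triv_mx_repr).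

Fixpoint tpow_grepr (rW : representation F H) (k : nat) : representation F H :=
  if k is k'.+1 then Representation (prod_repr rW (tpow_grepr rW k'))
  else triv_grepr.

Definition tsum_grepr (rW : representation F H) (t : nat) : representation F H :=
  \big[@dadd_grepr F gT H/@grepr0 F gT H]_(k < t.+1) tpow_grepr rW k.

(* W is rich: every simple F[H]-module (irreducible representation of H)
   occurs (up to isomorphism) as a composition factor of W. *)
Definition rich (rW : representation F H) : Prop :=
  forall rS : representation F H, mx_irreducible rS ->
    exists Us : seq 'M[F]_(rdegree rW),
    exists compUs : mx_composition_series rW Us,
      (last 0 Us == 1%:M)%MS /\
      exists i, exists lt_i : (i < size Us)%N,
        mx_rsim (series_repr i compUs) rS.

Definition tensor_rich (rW : representation F H) : Prop :=
  exists t : nat, (0 < t)%N /\ rich (tsum_grepr rW t).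

End TensorRich.

From HB Require Import structures.
From mathcomp Require Import all_boot all_order all_fingroup all_algebra all_solvable.
From mathcomp Require Import mxrepresentation character mxabelem.
From Stdlib Require Import Classical.
Set Implicit Arguments.
Unset Strict Implicit.
Unset Printing Implicit Defensive.
Import GRing.Theory.
Local Open Scope ring_scope.

(* Write H = G/N and W for the F[H]-module afforded by the induced representation. Its
   kernel ker ρ / N is a p-group, because the p'-part of every element of ker ρ lies in N,
   and a normal p-subgroup acts trivially on every simple module; hence every simple
   F[H]-module S factors through x ↦ W(x). The indicator function of a fibre of x ↦ W(x)
   is a product of |H| functions affine in the matrix entries of W(x), hence a matrix
   coefficient of T = ⊕_{k ≤ |H|} W^{⊗k}, so every element of F[H] annihilating T
   annihilates S. Finally, if ann(M) ⊆ ann(S) with S simple, then S is a composition factor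
   of M: there are m ∈ M and s ≠ 0 in S with ann(m) ⊆ ann(s), so S is a quotient of the
   cyclic module F[H]m, and a Schreier refinement puts this section into a composition
   series of M. *)

Section CompositionFactor.
Variables (F : fieldType) (gT : finGroupType) (G : {group gT}).
Variables (n : nat) (rM : mx_representation F G n).
Variables (s : nat) (rS : mx_representation F G s).

Definition mx_composition_factor : Prop :=
  exists Us : seq 'M[F]_n, exists compUs : mx_composition_series rM Us,
    (last 0 Us == 1%:M)%MS /\
    exists i, exists lt_i : (i < size Us)%N, mx_rsim (series_repr i compUs) rS.

Lemma mx_series_max_submod_pred (V : seq 'M_n) (U W : 'M_n) :
    mx_composition_series rM V -> U \in 0 :: V -> W \in V -> max_submod rM U W ->
  (U :=: (0 :: V)`_(index W V))%MS.
Proof.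
move=> compV UV WV [ltUW maxU].
have sortV : sorted (fun A B : 'M_n => A <= B)%MS (0 :: V).
  by apply: sub_path (mx_series_lt compV) => A B /ltmxW.
have leV := sorted_leq_nth (fun B A C => @submx_trans F n n n n A B C)
  (@submx_refl F n n) 0 sortV.
set b := index W V; have ltbV : (b < size V)%N by rewrite index_mem.
have Vb : V`_b = W := nth_index 0 WV.
have sUP : (U <= (0 :: V)`_b)%MS.
  have iU : index U (0 :: V) \in [pred i | i < (size V).+1]%N by rewrite inE index_mem.
  have iP : b \in [pred i | i < (size V).+1]%N by rewrite inE ltnW.
  have [le_ab | lt_ba] := leqP (index U (0 :: V)) b.
    by have := leV _ _ iU iP le_ab; rewrite nth_index.
  have := leV b.+1 _ ltbV iU lt_ba; rewrite /= Vb nth_index //.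
  by rewrite (negPf (proj2 (andP ltUW))).
apply/eqmxP; rewrite sUP /=; apply: contraT => nsPU; case: (maxU ((0 :: V)`_b)).
split; first exact: mx_subseries_module' (proj1 compV).
  by rewrite ltmxE sUP.
by rewrite -Vb; case: (proj2 compV b ltbV).
Qed.

Hypothesis irrS : mx_irreducible rS.

Lemma mx_composition_factor_section (U W : 'M_n)
    (modU : mxmodule rM U) (modW : mxmodule rM W) :
  (U <= W)%MS -> mx_rsim (section_repr modU modW) rS -> mx_composition_factor.
Proof.
move=> sUW simS; have maxUW := mx_rsim_irr (mx_rsim_sym simS) irrS.
have [ltUW _] := proj2 (max_submodP modU modW sUW) maxUW.
pose L := if U == 0 then [:: W] else [:: U; W].
have [V [compV /eqmxP lastV subLV]] :
    exists V, [/\ mx_composition_series rM V, last 0 V :=: 1%:M & subseq L V]%MS.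
  have modL : mx_subseries rM L by rewrite /L; case: ifP; rewrite /= ?modU modW.
  have ltL : path ltmx 0 L.
    rewrite /L; case: eqP => [_ | /eqP nzU] /=; last by rewrite ltUW lt0mx nzU.
    by rewrite (sub_ltmx_trans (sub0mx _ _) ltUW).
  by apply: NNPP; apply/classicP; apply: mx_Schreier modL ltL.
have WV : W \in V.
  by apply: (mem_subseq subLV); rewrite /L; case: ifP; rewrite !inE eqxx ?orbT.
have UV : U \in 0 :: V.
  rewrite inE; case: eqP => //= /eqP nzU; apply: (mem_subseq subLV).
  by rewrite /L (negPf nzU) inE eqxx.
have eqUP := mx_series_max_submod_pred compV UV WV (proj2 (max_submodP _ _ sUW) maxUW).
have ltWV : (index W V < size V)%N by rewrite index_mem.
exists V, compV; split=> //; exists (index W V), ltWV.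
apply: mx_rsim_trans simS; apply: mx_rsim_sym; apply: section_eqmx => //.
by rewrite nth_index.
Qed.
End CompositionFactor.

Section SectionOfHom.
Variables (F : fieldType) (gT : finGroupType) (G : {group gT}).
Variables (n : nat) (rM : mx_representation F G n).
Variables (s : nat) (rS : mx_representation F G s).
Variables (W : 'M[F]_n) (modW : mxmodule rM W) (h : 'M[F]_(n, s)).
Hypothesis homWh : {in G, forall x, W *m rM x *m h = W *m h *m rS x}.

Lemma hom_submx k (D : 'M_(k, n)) x :
  x \in G -> (D <= W)%MS -> D *m rM x *m h = D *m h *m rS x.
Proof. by move=> Gx /submxP[E ->]; rewrite -!mulmxA !(mulmxA W) homWh. Qed.

Lemma mxmodule_cap_kermx : mxmodule rM (W :&: kermx h)%MS.
Proof.
apply/mxmoduleP => x Gx; rewrite sub_capmx (mxmodule_trans modW Gx) ?capmxSl //=.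
by apply/sub_kermxP; rewrite hom_submx ?capmxSl // (sub_kermxP (capmxSr _ _)) mul0mx.
Qed.

Hypotheses (irrS : mx_irreducible rS) (nzWh : W *m h != 0).

Lemma mxrank_hom_irr : \rank (W *m h) = s.
Proof.
have modWh : mxmodule rS (W *m h).
  by apply/mxmoduleP => x Gx; rewrite -homWh // submxMr // (mxmoduleP modW).
have [_ irr] := proj1 (mx_irrP rS) irrS.
have := irr _ (etrans (eqmx_module _ (genmxE (W *m h))) modWh).
by rewrite -mxrank_eq0 /row_full !genmxE mxrank_eq0 => /(_ nzWh)/eqP.
Qed.

Lemma mx_rsim_section_kermx :
  mx_rsim (section_repr mxmodule_cap_kermx modW) rS.
Proof.
set K := (W :&: kermx h)%MS; have sKW : (K <= W)%MS := capmxSl _ _.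
have Kh k (D : 'M_(k, n)) : (D <= K)%MS -> D *m h = 0.
  by move=> sDK; apply/sub_kermxP/(submx_trans sDK)/capmxSr.
have factmod_h k (Y : 'M_(k, n)) : val_factmod (in_factmod K Y) *m h = Y *m h.
  by rewrite -{2}(add_sub_fact_mod K Y) mulmxDl (Kh _ _ (val_submodP _)) add0r.
set SW := <<in_factmod K W>>%MS.
(* [Z] lifts a basis of [W / K] to rows of [W]. *)
pose Z := val_factmod (val_submod (1%:M : 'M_(\rank SW))) : 'M_(\rank SW, n).
have ZW : (Z <= W)%MS.
  rewrite -(in_factmodsK sKW) (submx_trans _ (addsmxSr _ _)) // val_factmodS.
  by rewrite -(genmxE (in_factmod K W)) val_submodP.
exists (Z *m h).
- rewrite genmxE -mxrank_hom_irr; apply/eqP.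
  rewrite -(eqn_add2r (\rank K)) mxrank_in_factmod (addsmx_idPr sKW).
  by rewrite -(mxrank_mul_ker W h) addnC.
- rewrite -kermx_eq0; apply/rowV0P => v /sub_kermxP; rewrite mulmxA => vZh.
  have vZ : v *m Z = val_factmod (val_submod v).
    by rewrite /Z val_factmodE mulmxA -val_submodE -val_factmodE.
  have : (v *m Z <= K :&: K^C)%MS.
    rewrite sub_capmx {2}vZ val_factmodP andbT sub_capmx (submx_trans (submxMl v Z) ZW).
    exact/sub_kermxP.
  by rewrite capmx_compl submx0 vZ val_factmod_eq0 val_submod_eq0 => /eqP.
- move=> x Gx; rewrite mulmxA -hom_submx //.
  have -> : section_repr mxmodule_cap_kermx modW x *m Z =
      val_factmod (in_factmod K (Z *m rM x)).
    rewrite /Z val_factmodE mulmxA -val_factmodE -val_submodE -[section_repr _ _ x]mul1mx.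
    by rewrite (val_submodJ (section_module _ _)) // -val_factmodE val_factmodJ.
  by rewrite factmod_h.
Qed.
End SectionOfHom.

Lemma mulmx_pinvmx_ker (F : fieldType) m n p (A : 'M[F]_(m, n)) (B : 'M[F]_(m, p)) :
  (forall c : 'rV_m, c *m A = 0 -> c *m B = 0) -> A *m (pinvmx A *m B) = B.
Proof.
move=> kerAB; apply/eqP; rewrite mulmxA -subr_eq0 -{2}[B]mul1mx -mulmxBl.
apply/eqP/row_matrixP => i; rewrite row_mul row0 kerAB //.
by rewrite -row_mul mulmxBl mul1mx mulmxKpV ?subrr ?row0.
Qed.

Section Annihilator.
Variables (F : fieldType) (gT : finGroupType) (G : {group gT}).
Local Notation aG := (regular_repr F G).

(* Its rows span the cyclic submodule generated by [v]. *)
Definition orbit_mx k (rX : mx_representation F G k) (v : 'rV[F]_k) :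
  'M[F]_(#|G|, k) := lin1_mx (mulmx v \o gring_mx rX).

Section OrbitMx.
Variables (k : nat) (rX : mx_representation F G k) (v : 'rV[F]_k).

Lemma mul_rV_orbit_mx c : c *m orbit_mx rX v = v *m gring_mx rX c.
Proof. exact: mul_rV_lin1. Qed.

Lemma orbit_mxJ x : x \in G -> orbit_mx rX v *m rX x = aG x *m orbit_mx rX v.
Proof.
move=> Gx; apply/row_matrixP => i; rewrite !row_mul.
by rewrite (rowE i (aG x)) rowE !mul_rV_lin1 /= -mulmxA gring_mxJ.
Qed.

Lemma orbit_mx_eq0 : (orbit_mx rX v == 0) = (v == 0).
Proof.
apply/eqP/eqP => v0; last first.
  by apply/row_matrixP => i; rewrite rowE mul_rV_orbit_mx v0 mul0mx row0.
have := mul_rV_orbit_mx (gring_row (aG 1%g)).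
by rewrite v0 mulmx0 -gring_opE gring_opG // repr_mx1 mulmx1.
Qed.

End OrbitMx.

Variables (n : nat) (rM : mx_representation F G n).
Variables (s : nat) (rS : mx_representation F G s).

Lemma mx_composition_factor_orbit (m : 'rV[F]_n) (v : 'rV[F]_s) :
    mx_irreducible rS -> v != 0 ->
    (forall c, m *m gring_mx rM c = 0 -> v *m gring_mx rS c = 0) ->
  mx_composition_factor rM rS.
Proof.
move=> irrS nz_v annMS; set fM := orbit_mx rM m; set fS := orbit_mx rS v.
have [h fMh] : {h | fM *m h = fS}.
  exists (pinvmx fM *m fS); apply: mulmx_pinvmx_ker => c.
  by rewrite !mul_rV_orbit_mx; apply: annMS.
set W := <<fM>>%MS.
have modW : mxmodule rM W.
  rewrite (eqmx_module _ (genmxE _)); apply/mxmoduleP => x Gx.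
  by rewrite orbit_mxJ // submxMl.
have homWh : {in G, forall x, W *m rM x *m h = W *m h *m rS x}.
  move=> x Gx; have /submxP[D ->] : (W <= fM)%MS by rewrite genmxE.
  by rewrite -!mulmxA (mulmxA fM) orbit_mxJ // -mulmxA fMh (mulmxA fM) fMh orbit_mxJ.
have nzWh : W *m h != 0.
  apply: contraNneq nz_v => Wh0; rewrite -(orbit_mx_eq0 rS) -/fS -fMh.
  have /submxP[D ->] : (fM <= W)%MS by rewrite genmxE.
  by rewrite -mulmxA Wh0 mulmx0.
have := mx_rsim_section_kermx modW homWh irrS nzWh.
by apply: (mx_composition_factor_section irrS); rewrite capmxSl.
Qed.

Lemma exists_vector_annihilator_sub (u : 'rV[F]_s) : u != 0 ->
    (forall c, gring_mx rM c = 0 -> gring_mx rS c = 0) ->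
  exists (m : 'rV[F]_n) (v : 'rV[F]_s), v != 0 /\
    forall c, m *m gring_mx rM c = 0 -> v *m gring_mx rS c = 0.
Proof.
move=> nz_u annMS.
(* Right multiplication kills the rows of [gring_mx rM c0] one at a time while keeping
   [u *m gring_mx rS c0] nonzero; when the next row cannot be killed, that row and
   [u *m gring_mx rS c0] are the required vectors. *)
suff IH : forall k c0,
    (forall i : 'I_n, (k <= i)%N -> row i (gring_mx rM c0) = 0) ->
    u *m gring_mx rS c0 != 0 ->
  exists (m : 'rV[F]_n) (v : 'rV[F]_s), v != 0 /\
    forall c, m *m gring_mx rM c = 0 -> v *m gring_mx rS c = 0.
  apply: (IH n (gring_row (aG 1%g))) => [i|]; first by rewrite leqNgt ltn_ord.
  by rewrite -gring_opE gring_opG // repr_mx1 mulmx1.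
elim=> [|k IHk] c0 kill_c0 nz_c0.
  case/negP: nz_c0; rewrite annMS ?mulmx0 //.
  by apply/row_matrixP => i; rewrite row0 kill_c0.
have [ltkn | lenk] := ltnP k n; last first.
  by apply: IHk nz_c0 => i; rewrite leqNgt (leq_trans (ltn_ord i)).
set m := row (Ordinal ltkn) (gring_mx rM c0).
have [[c [mc nz_c]] | ] := classic (exists c,
  m *m gring_mx rM c = 0 /\ u *m gring_mx rS (c0 *m gring_mx aG c) != 0).
  apply: IHk nz_c => i; rewrite leq_eqVlt gring_mxA row_mul => /orP[/eqP ki | lt_ki].
    by have -> : i = Ordinal ltkn by apply: val_inj.
  by rewrite kill_c0 ?mul0mx.
move=> no_c; exists m, (u *m gring_mx rS c0); split=> // c mc.
apply/eqP/negPn/negP => nz_c; apply: no_c; exists c; split=> //.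
by rewrite gring_mxA mulmxA.
Qed.

Lemma mx_composition_factor_annihilator : mx_irreducible rS ->
    (forall c, gring_mx rM c = 0 -> gring_mx rS c = 0) ->
  mx_composition_factor rM rS.
Proof.
move=> irrS annMS.
have [m [v [nz_v annmv]]] := exists_vector_annihilator_sub (nz_row_mxsimple irrS) annMS.
exact: mx_composition_factor_orbit irrS nz_v annmv.
Qed.

End Annihilator.

Section MatrixCoefficient.
Variables (F : fieldType) (gT : finGroupType) (G : {group gT}).
Implicit Types (X Y : representation F G) (f g : gT -> F).

Definition mx_coef X f :=
  exists L : 'M[F]_(rdegree X), {in G, forall x, f x = \tr (L *m X x)}.

Lemma eq_mx_coef X f g : {in G, f =1 g} -> mx_coef X f -> mx_coef X g.
Proof. by move=> efg [L fL]; exists L => x Gx; rewrite -efg ?fL. Qed.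

Lemma mx_coef0 X : mx_coef X (fun=> 0).
Proof. by exists 0 => x _; rewrite mul0mx mxtrace0. Qed.

Lemma mx_coefD X f g : mx_coef X f -> mx_coef X g -> mx_coef X (fun x => f x + g x).
Proof.
by move=> [L fL] [M gM]; exists (L + M) => x Gx; rewrite mulmxDl mxtraceD fL ?gM.
Qed.

Lemma mx_coefZ X a f : mx_coef X f -> mx_coef X (fun x => a * f x).
Proof. by move=> [L fL]; exists (a *: L) => x Gx; rewrite -scalemxAl mxtraceZ fL. Qed.

Lemma mx_coef_daddl X Y f : mx_coef X f -> mx_coef (dadd_grepr X Y) f.
Proof.
move=> [L fL]; exists (block_mx L 0 0 0) => x Gx /=.
by rewrite mulmx_block !(mul0mx, mulmx0, addr0) mxtrace_block mxtrace0 addr0 fL.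
Qed.

Lemma mx_coef_daddr X Y f : mx_coef Y f -> mx_coef (dadd_grepr X Y) f.
Proof.
move=> [L fL]; exists (block_mx 0 0 0 L) => x Gx /=.
by rewrite mulmx_block !(mul0mx, mulmx0, add0r) mxtrace_block mxtrace0 add0r fL.
Qed.

Lemma mx_coef_dadd_split X Y f : mx_coef (dadd_grepr X Y) f ->
  exists g h, [/\ mx_coef X g, mx_coef Y h & {in G, forall x, f x = g x + h x}].
Proof.
move=> [L fL].
exists (fun x => \tr (ulsubmx L *m X x)), (fun x => \tr (drsubmx L *m Y x)).
split; [by exists (ulsubmx L) | by exists (drsubmx L) | move=> x Gx].
rewrite fL //= -{1}(submxK L) mulmx_block !(mul0mx, mulmx0, addr0, add0r).
by rewrite mxtrace_block.
Qed.

Lemma mx_coef_prod X Y f g : mx_coef X f -> mx_coef Y g ->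
  mx_coef (Representation (prod_repr X Y)) (fun x => f x * g x).
Proof.
by move=> [L fL] [M gM]; exists (tprod L M) => x Gx /=; rewrite -tprodE mxtrace_prod fL ?gM.
Qed.

Lemma mx_coef_grepr0 f : mx_coef grepr0 f -> {in G, f =1 fun=> 0}.
Proof. by move=> [L fL] x Gx; rewrite fL // /mxtrace big_ord0. Qed.

Lemma mx_coef_triv a : mx_coef (triv_grepr F G) (fun=> a).
Proof. by exists a%:M => x Gx /=; rewrite mulmx1 mxtrace_scalar. Qed.

Lemma mx_coef_entry n (r : mx_representation F G n) i j :
  mx_coef (Representation r) (fun x => r x i j).
Proof.
exists (delta_mx j i) => x Gx /=; rewrite /mxtrace (bigD1 j) //= big1 ?addr0.
  rewrite mxE (bigD1 i) //= big1 ?addr0 ?mxE ?eqxx ?mul1r // => k nki.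
  by rewrite !mxE (negPf nki) andbF mul0r.
by move=> k nkj; rewrite mxE big1 // => l _; rewrite mxE (negPf nkj) mul0r.
Qed.

Lemma gring_mxE n (r : mx_representation F G n) (c : 'rV_#|G|) :
  gring_mx r c = \sum_(i < #|G|) c 0 i *: r (enum_val i).
Proof.
rewrite /gring_mx /= mulmx_sum_row linear_sum; apply: eq_bigr => i _.
by rewrite linearZ /= rowK mxvecK.
Qed.

Lemma mx_coef_gring_mx_eq0 X f (c : 'rV_#|G|) : mx_coef X f -> gring_mx X c = 0 ->
  \sum_(i < #|G|) c 0 i * f (enum_val i) = 0.
Proof.
move=> [L fL] Xc0; transitivity (\tr (L *m gring_mx X c)); last first.
  by rewrite Xc0 mulmx0 mxtrace0.
rewrite gring_mxE mulmx_sumr raddf_sum /=; apply: eq_bigr => i _.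
by rewrite -scalemxAr mxtraceZ fL ?enum_valP.
Qed.

Lemma mx_coef_big_daddS m (Y : nat -> representation F G) f :
    mx_coef (\big[dadd_grepr/grepr0]_(k < m) Y k) f ->
  mx_coef (\big[dadd_grepr/grepr0]_(k < m.+1) Y k) f.
Proof.
elim: m Y f => [|m IHm] Y f.
  rewrite big_ord0 => /mx_coef_grepr0 f0.
  by apply: eq_mx_coef (mx_coef0 _) => x Gx; rewrite f0.
rewrite big_ord_recl (big_ord_recl m.+1) => /mx_coef_dadd_split[f1 [f2 [Yf1 Yf2 ef]]].
apply: eq_mx_coef (mx_coefD (mx_coef_daddl _ Yf1)
  (mx_coef_daddr _ (IHm (fun k => Y k.+1) _ Yf2))).
by move=> x Gx; rewrite ef.
Qed.

Lemma mx_coef_big_dadd_prod m (Y : nat -> representation F G) X f g :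
    mx_coef X g -> mx_coef (\big[dadd_grepr/grepr0]_(k < m) Y k) f ->
  mx_coef (\big[dadd_grepr/grepr0]_(k < m) Representation (prod_repr X (Y k)))
    (fun x => g x * f x).
Proof.
move=> Xg; elim: m Y f => [|m IHm] Y f.
  rewrite !big_ord0 => /mx_coef_grepr0 f0.
  by apply: eq_mx_coef (mx_coef0 _) => x Gx; rewrite f0 ?mulr0.
rewrite !big_ord_recl => /mx_coef_dadd_split[f1 [f2 [Yf1 Yf2 ef]]].
apply: eq_mx_coef (mx_coefD (mx_coef_daddl _ (mx_coef_prod Xg Yf1))
  (mx_coef_daddr _ (IHm (fun k => Y k.+1) _ Yf2))).
by move=> x Gx; rewrite ef // mulrDr.
Qed.

End MatrixCoefficient.

Lemma sum_fibers_eq0 (F : fieldType) (I : finType) (T : eqType) (V : lmodType F)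
    (key : I -> T) (phi : I -> V) (c : I -> F) :
    (forall i j, key i = key j -> phi i = phi j) ->
    (forall j, \sum_(i | key i == key j) c i = 0) ->
  \sum_i c i *: phi i = 0.
Proof.
move=> phi_key c_fiber.
pose rho i := odflt i [pick j | key j == key i].
have key_rho i : key (rho i) = key i.
  by rewrite /rho; case: pickP => [j /eqP | /(_ i)/eqP].
have rho_key i j : key i = key j -> rho i = rho j.
  move=> eij; rewrite /rho eij; case: pickP => // /(_ j)/eqP.
  by case.
rewrite (partition_big rho xpredT) //=; apply: big1 => j _.
rewrite (eq_bigr (fun i => c i *: phi j)) => [|i /eqP <-]; last first.
  by rewrite (phi_key _ _ (key_rho i)).
rewrite -scaler_suml; have [rho_j | rho_j] := eqVneq (rho j) j.
  rewrite (eq_bigl (fun i => key i == key j)) ?c_fiber ?scale0r // => i.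
  apply/eqP/eqP => [<- | /rho_key ->] //; exact: esym (key_rho i).
rewrite big_pred0 ?scale0r // => i; apply/eqP => rho_i; case/eqP: rho_j.
by rewrite -rho_i; apply: rho_key; rewrite key_rho.
Qed.

Section TensorSum.
Variables (F : fieldType) (gT : finGroupType) (G : {group gT}).
Variables (n : nat) (r : mx_representation F G n).
Local Notation T := (tsum_grepr (Representation r)).

Lemma mx_coef_tsumS t f : mx_coef (T t) f -> mx_coef (T t.+1) f.
Proof. exact: mx_coef_big_daddS. Qed.

Lemma mx_coef_tsum_cst t a : mx_coef (T t) (fun=> a).
Proof. by rewrite /tsum_grepr big_ord_recl; apply/mx_coef_daddl/mx_coef_triv. Qed.

Lemma mx_coef_tsum_affine t f i j a b : mx_coef (T t) f ->
  mx_coef (T t.+1) (fun x => (a * r x i j + b) * f x).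
Proof.
move=> Tf; have Tfr : mx_coef (T t.+1) (fun x => r x i j * f x).
  rewrite /tsum_grepr big_ord_recl; apply: mx_coef_daddr.
  exact: mx_coef_big_dadd_prod (mx_coef_entry r i j) Tf.
apply: eq_mx_coef (mx_coefD (mx_coefZ a Tfr) (mx_coefZ b (mx_coef_tsumS Tf))) => x _.
by rewrite mulrDl mulrA.
Qed.

(* As a function of [x], each factor is affine in one entry of [r x], equals 1 where
   [r x = r g], and vanishes at [x = y] unless [r y = r g]. *)
Definition lagrange_factor (g y x : gT) : F :=
  if [pick ij : 'I_n * 'I_n | r y ij.1 ij.2 != r g ij.1 ij.2] is Some (i, j)
  then (r x i j - r y i j) / (r g i j - r y i j) else 1.

Lemma mx_coef_tsum_lagrange t g y f : mx_coef (T t) f ->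
  mx_coef (T t.+1) (fun x => lagrange_factor g y x * f x).
Proof.
rewrite /lagrange_factor; case: pickP => [[i j] _ | _] Tf; last first.
  by apply: eq_mx_coef (mx_coef_tsumS Tf) => x _; rewrite mul1r.
set d := r g i j - r y i j.
apply: eq_mx_coef (mx_coef_tsum_affine i j d^-1 (- r y i j / d) Tf) => x _.
by rewrite mulrBl mulNr [d^-1 * _]mulrC.
Qed.

Lemma prod_lagrange_factor g x : x \in G ->
  \prod_(y <- enum G) lagrange_factor g y x = (r x == r g)%:R.
Proof.
move=> Gx; have [rxg | nrxg] := eqVneq (r x) (r g).
  rewrite big1_seq // => y _; rewrite /lagrange_factor.
  by case: pickP => [[i j] /= nyg | //]; rewrite rxg divff // subr_eq0 eq_sym.
rewrite (bigD1_seq x) ?mem_enum ?enum_uniq //= /lagrange_factor.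
case: pickP => [[i j] _ | no_ij]; first by rewrite subrr !mul0r.
by case/eqP: nrxg; apply/matrixP => i j; apply/eqP/negbFE/(no_ij (i, j)).
Qed.

Lemma mx_coef_tsum_fiber g : mx_coef (T #|G|) (fun x => (r x == r g)%:R).
Proof.
have Tprod (l : seq gT) :
    mx_coef (T (size l)) (fun x => \prod_(y <- l) lagrange_factor g y x).
  elim: l => [|y l IHl].
    by apply: eq_mx_coef (mx_coef_tsum_cst 0 1) => x _; rewrite big_nil.
  by apply: eq_mx_coef (mx_coef_tsum_lagrange g y IHl) => x _; rewrite big_cons.
by rewrite cardE; apply: eq_mx_coef (Tprod (enum G)) => x; apply: prod_lagrange_factor.
Qed.

Lemma gring_mx_tsum_eq0 s (rS : mx_representation F G s) (c : 'rV_#|G|) :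
    {in G &, forall x y, r x = r y -> rS x = rS y} ->
  gring_mx (T #|G|) c = 0 -> gring_mx rS c = 0.
Proof.
move=> rSr Tc0; rewrite gring_mxE.
apply: (@sum_fibers_eq0 F _ _ _ (fun i => r (enum_val i))) => [i j | j].
  by apply: rSr; apply: enum_valP.
rewrite -[RHS](mx_coef_gring_mx_eq0 (mx_coef_tsum_fiber (enum_val j)) Tc0) big_mkcond /=.
by apply: eq_bigr => i _; case: eqP; rewrite ?mulr1 ?mulr0.
Qed.

End TensorSum.

Section Kernel.
Variables (F : fieldType) (gT : finGroupType) (G : {group gT}).
Variables (n : nat) (r : mx_representation F G n).
Variables (s : nat) (rS : mx_representation F G s).
Local Open Scope group_scope.

Lemma rker_sub_repr_eq : rker r \subset rker rS ->
  {in G &, forall x y, r x = r y -> rS x = rS y}.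
Proof.
move=> sK x y Gx Gy rxy; have Gxy : x * y^-1 \in G by rewrite groupM ?groupV.
have /(subsetP sK)/rkerP[_ rSxy] : x * y^-1 \in rker r.
  by apply/rkerP; rewrite repr_mxM ?groupV // repr_mxV // rxy mulmxV ?repr_mx_unit.
by rewrite -[x](mulgVK y) repr_mxM // rSxy mul1mx.
Qed.

Lemma pchar_normal_sub_rker_irr (K : {group gT}) :
  [pchar F].-group K -> K <| G -> mx_irreducible rS -> K \subset rker rS.
Proof.
move=> pK nKG irrS; have [-> | ntK] := eqVneq K 1%G; first exact: sub1G.
have p_pr : prime (pdiv #|K|) by rewrite pdiv_prime // cardG_gt1.
have pcharFp : pdiv #|K| \in [pchar F] by apply: (pgroupP pK) => //; apply: pdiv_dvd.
have pK' : (pdiv #|K|).-group K.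
  by apply: sub_in_pnat pK => q _; rewrite (pcharf_eq pcharFp).
exact: subset_trans (pcore_max pK' nKG) (pcore_sub_rker_mx_irr_pchar pcharFp irrS).
Qed.

End Kernel.

Local Open Scope group_scope.

Theorem tensor_rich_rker_pchar (F : fieldType) (gT : finGroupType) (G : {group gT})
    n (r : mx_representation F G n) :
  [pchar F].-group (rker r) -> tensor_rich (Representation r).
Proof.
move=> pK; exists #|G|; split=> [|rS irrS]; first exact: cardG_gt0.
apply: (mx_composition_factor_annihilator irrS) => c; apply: gring_mx_tsum_eq0.
exact: rker_sub_repr_eq (pchar_normal_sub_rker_irr pK (rker_normal r) irrS).
Qed.

Lemma pgroup_quotient_constt (gT : finGroupType) pi (K N : {group gT}) :
  K \subset 'N(N) -> {in K, forall g, g.`_pi^' \in N} -> pi.-group (K / N).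
Proof.
move=> nNK Npi'; apply/pgroupP => p p_pr /(Cauchy p_pr)[_ /morphimP[g Ng Kg ->] ox].
have Ng_pi : g.`_pi \in 'N(N) by rewrite (subsetP _ _ (cycle_constt pi g)) ?cycle_subG.
have Ng_pi' : g.`_pi^' \in N := Npi' g Kg.
rewrite -(pnatE pi p_pr) -ox -[g](consttC pi) morphM ?(subsetP (normG N) _ Ng_pi') //=.
by rewrite (coset_id Ng_pi') mulg1; apply: morph_p_elt Ng_pi (p_elt_constt pi g).
Qed.

Section PregKerSubgroup.
Variables (F : fieldType) (gT : finGroupType) (G : {group gT}).
Variables (n : nat) (rG : mx_representation F G n).
Local Notation N := (preg_ker_subgroup rG).

Lemma p_regularE (x : gT) : p_regular F x = [pchar F]^'.-elt x.
Proof. by rewrite /p_regular unitfE natf_neq0_pchar. Qed.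

Lemma preg_ker_subgroup_sub : N \subset rker rG.
Proof. by rewrite gen_subG; apply/subsetP => x /setIdP[]. Qed.

Lemma preg_ker_subgroup_normal : N <| G.
Proof.
rewrite /normal (subset_trans preg_ker_subgroup_sub) ?rstab_sub //=.
apply: norms_gen; apply/subsetP => g Gg; rewrite inE; apply/subsetP => _ /imsetP[y + ->].
case/setIdP=> Ky preg_y; apply/setIdP; split.
  by rewrite memJ_norm ?(subsetP (rker_norm rG)).
by rewrite /p_regular orderJ.
Qed.

Lemma preg_ker_subgroup_constt : {in rker rG, forall g, g.`_([pchar F]^') \in N}.
Proof.
move=> g Kg; rewrite mem_gen // inE p_regularE p_elt_constt andbT.
by rewrite (subsetP _ _ (cycle_constt _ g)) ?cycle_subG.
Qed.

End PregKerSubgroup.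

Theorem proposition7p5 (F : closedFieldType) (gT : finGroupType) (G : {group gT})
    (n : nat) (rG : mx_representation F G n) :
  preg_ker_subgroup rG <| G /\
  exists rGq : mx_representation F (G / preg_ker_subgroup rG)%G n,
    {in G, forall x, rGq (coset (preg_ker_subgroup rG) x) = rG x} /\
    tensor_rich (Representation rGq).
Proof.
have nsNG := preg_ker_subgroup_normal rG; have nNG := normal_norm nsNG.
split=> //; exists (quo_repr (preg_ker_subgroup_sub rG) nNG); split.
  by move=> x; apply: quo_repr_coset.
apply: tensor_rich_rker_pchar; rewrite rker_quo.
apply: pgroup_quotient_constt (subset_trans (rstab_sub _ _) nNG) _.
exact: preg_ker_subgroup_constt.
Qed.
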